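(* Let $\mathcal C$ be a tangent category, $G$ a differentiable groupoid object in $\mathcal C$, and $r:E\to G_0$ a differentiable right $G$-bundle. Then the set $\mathcal X(E)^G$ of invariant vector fields on $E$ is a Lie subalgebra of the Lie algebra $(\Gamma(E,TE),+,[\cdot,\cdot])$ of all vector fields on $E$; that is, $\mathcal X(E)^G$ is an abelian subgroup of $\Gamma(E,TE)$ and $[v,w]\in\mathcal X(E)^G$ for all $v,w\in\mathcal X(E)^G$.
   Context: Notation. Juxtaposition denotes composition of functors and whiskering: $(\alpha T)_X=\alpha_{TX}$, $(T\alpha)_X=T(\alpha_X)$; $T^n$ is the $n$-fold composite. For morphisms $f:X\to A$, $g:X\to B$ over a common object, $(f,g)$ denotes the induced morphism into the (fiber) product, and $f\times_h g$ the induced morphism between pullbacks. Tangent category (Rosický, with negatives). A category $\mathcal C$ with an endofunctor $T$ and natural transformations $\pi:T\Rightarrow\mathrm{id}$, $0:\mathrm{id}\Rightarrow T$, $+:T_2\Rightarrow T$, $\lambda:T\Rightarrow T^2$, $\tau:T^2\Rightarrow T^2$ such that: (T1) for every $X$ and $k\ge1$ the $k$-fold fiber product $T_kX=TX\times_X\cdots\times_XTX$ of $\pi_X$ with itself exists, and $T$ preserves it: the canonical map $T(T_kX)\to T^2X\times_{TX}\cdots\times_{TX}T^2X$ (fibered over $T\pi_X$) is an isomorphism; (T2) $(\pi_X:TX\to X,0_X,+_X)$ is an abelian group object in the slice $\mathcal C/X$; $-_X:T_2X\to TX$ denotes its subtraction; (T3) $\tau\circ\tau=\mathrm{id}$, $\tau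 T\circ T\tau\circ\tau T=T\tau\circ\tau T\circ T\tau$, $\pi T\circ\tau=T\pi$, and $\tau$ is additive: $\tau_X\circ T(+_X)=+_{TX}\circ(\tau_X\times\tau_X)\circ\nu$ where $\nu:T(T_2X)\cong T^2X\times_{TX}T^2X$ is the iso of (T1); (T4) $\pi_{TX}\circ\lambda_X=0_X\circ\pi_X$, $\lambda_{TX}\circ\lambda_X=T(\lambda_X)\circ\lambda_X$, $\lambda_X\circ+_X=+_{TX}\circ(\lambda_X\times\lambda_X)$; (T5) $\tau_X\circ\lambda_X=\lambda_X$ and $T(\tau_X)\circ\tau_{TX}\circ T(\lambda_X)=\lambda_{TX}\circ\tau_X$; (T6) the square with top $\lambda:T\to T^2$, right $(\pi T,T\pi):T^2\to T_2$, left $\pi:T\to\mathrm{id}$, bottom $(0,0):\mathrm{id}\to T_2$ is a pointwise pullback. Write $0^{[n]}_X=T^{n-1}0_X\circ\cdots\circ T0_X\circ0_X:X\to T^nX$ ($0^{[0]}_X=\mathrm{id}_X$), $0_{(m),X}=(0_X,\dots,0_X):X\to T_mX$, and $\lambda_{2,X}=\tau_X\circ+_{TX}\circ(T0_X\times_{0_X}\lambda_X):T_2X\to T^2X$. Vector fields and bracket. A vector field on $X$ is a section $v$ of $\pi_X$; $\Gamma(X,TX)$ is an abelian group with $v+w=+_X\circ(v,w)$. For vector fields $v,w$ put $\delta(v,w)=-_{TX}\circ(Tw\circ v,\ \tau_X\circ Tv\circ w):X\to T^2X$ (difference in the bundle $\pi_{TX}$); $[v,w]$ is the unique vector field with $\delta(v,w)=\lambda_{2,X}\circ(w,[v,w])$.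 This is a Lie bracket on $\Gamma(X,TX)$. Groupoid objects. A groupoid object $G$: objects $G_0,G_1$, morphisms $s,t:G_1\to G_0$, $1:G_0\to G_1$, $i:G_1\to G_1$, $m:G_1\times^{s,t}_{G_0}G_1\to G_1$, such that the iterated fiber products $G_k=G_1\times^{s,t}_{G_0}\cdots\times^{s,t}_{G_0}G_1$ ($k$ factors) exist for all $k\ge2$, and the usual axioms hold: $s\circ m=s\circ\mathrm{pr}_2$, $t\circ m=t\circ\mathrm{pr}_1$, $s\circ1=t\circ1=\mathrm{id}$, $s\circ i=t$, associativity of $m$, $m\circ(1\circ t,\mathrm{id})=\mathrm{id}=m\circ(\mathrm{id},1\circ s)$, $m\circ(\mathrm{id},i)=1\circ t$, $m\circ(i,\mathrm{id})=1\circ s$. Let $t_k=t\circ\mathrm{pr}_1:G_k\to G_0$ for $k\ge1$ and $t_0=\mathrm{id}_{G_0}$. Differentiable groupoid. $G$ is differentiable if for all $n\ge1,m\ge2,k\ge0$ the pullbacks $T^nG_1\times^{T^ns,T^nt_k}_{T^nG_0}T^nG_k$, $T^nG_1\times^{T^ns,\,0^{[n]}_{G_0}\circ t_k}_{T^nG_0}G_k$, $T_mG_1\times^{T_ms,\,0_{(m),G_0}\circ t_k}_{T_mG_0}G_k$ and $G_0\times^{1,\ \pi_{G_1}\circ\mathrm{pr}_1}_{G_1}(TG_1\times^{Ts,0_{G_0}}_{TG_0}G_0)$ exist, and the canonical map $T^n(G_1\times^{s,t_k}_{G_0}G_k)\to T^nG_1\times^{T^ns,T^nt_k}_{T^nG_0}T^nG_k$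 is an isomorphism. Right $G$-bundles. A morphism $r:E\to G_0$ such that $E\times^{r,t_k}_{G_0}G_k$ exist for all $k\ge1$, with an action $\beta_E:E\times^{r,t}_{G_0}G_1\to E$ satisfying $r\circ\beta_E=s\circ\mathrm{pr}_2$, $\beta_E\circ(\mathrm{id},1\circ r)=\mathrm{id}_E$, $\beta_E\circ(\mathrm{id}_E\times_{G_0}m)=\beta_E\circ(\beta_E\times_{G_0}\mathrm{id}_{G_1})$. A morphism $\Phi:E\to F$ of $G$-bundles is $G$-equivariant if $r_F\circ\Phi=r_E$ and $\beta_F\circ(\Phi\times_{G_0}\mathrm{id})=\Phi\circ\beta_E$. Differentiable $G$-bundles. $E$ is differentiable if $G$ is, and for all $n\ge1,m\ge2,k\ge0$ the pullbacks $T^nE\times^{T^nr,T^nt_k}_{T^nG_0}T^nG_k$, $T^nE\times^{T^nr,\,0^{[n]}_{G_0}\circ t_k}_{T^nG_0}G_k$, $T_mE\times^{T_mr,\,0_{(m),G_0}\circ t_k}_{T_mG_0}G_k$ exist and the canonical $\nu_{n,k}:T^n(E\times^{r,t_k}_{G_0}G_k)\to T^nE\times_{T^nG_0}T^nG_k$ is an isomorphism. Then $T^nE$ carries the $T^nG$-action $\beta_{T^nE}=T^n\beta_E\circ\nu_{n,1}^{-1}$. Vertical bundles. $V^{[n]}E=T^nE\times^{T^nr,\,0^{[n]}_{G_0}}_{T^nG_0}G_0$ with projections $i_{V^{[n]}E}:V^{[n]}E\to T^nE$ (a monomorphism) and $r_{V^{[n]}E}:V^{[n]}E\to G_0$; $VE=V^{[1]}E$.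 Its right $G$-action $\beta_{V^{[n]}E}:V^{[n]}E\times_{G_0}G_1\to V^{[n]}E$ is the unique morphism with $i_{V^{[n]}E}\circ\beta_{V^{[n]}E}=\beta_{T^nE}\circ(i_{V^{[n]}E}\times_{0^{[n]}_{G_0}}0^{[n]}_{G_1})$ (lying over $s\circ\mathrm{pr}_2$). Invariant vector fields. A vector field $v$ on $E$ is vertical if $v=i_{VE}\circ v'$ for some (unique) $v':E\to VE$; it is invariant if moreover $v'$ is $G$-equivariant (a morphism of $G$-bundles $E\to VE$). $\mathcal X(E)^G$ denotes the set of invariant vector fields. *)

From Stdlib Require Import Arith.

Set Implicit Arguments.
Unset Strict Implicit.

(** * Categories (morphism equality is Leibniz equality) *)
Record Cat := {
  ob :> Type;
  hom : ob -> ob -> Type;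
  comp : forall (A B D : ob), hom B D -> hom A B -> hom A D;
  idm : forall (A : ob), hom A A;
  comp_assoc : forall (A B D E : ob) (h : hom D E) (g : hom B D) (f : hom A B),
      comp h (comp g f) = comp (comp h g) f;
  comp_idl : forall (A B : ob) (f : hom A B), comp (idm B) f = f;
  comp_idr : forall (A B : ob) (f : hom A B), comp f (idm A) = f
}.
Arguments hom {c} A B.
Arguments comp {c A B D} _ f.
Arguments idm {c A}.

Notation "g ∘ f" := (comp g f) (at level 40, left associativity).

Definition is_pb {C : Cat} {A B D P : C} (f : hom A D) (g : hom B D)
    (p1 : hom P A) (p2 : hom P B) : Prop :=
  f ∘ p1 = g ∘ p2 /\
  forall (Z : C) (u : hom Z A) (v : hom Z B), f ∘ u = g ∘ v ->
    exists h : hom Z P, (p1 ∘ h = u /\ p2 ∘ h = v) /\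
      forall h' : hom Z P, p1 ∘ h' = u -> p2 ∘ h' = v -> h' = h.

Definition has_pb {C : Cat} {A B D : C} (f : hom A D) (g : hom B D) : Prop :=
  exists (P : C) (p1 : hom P A) (p2 : hom P B), is_pb f g p1 p2.

Definition is_wide_pb {C : Cat} {A B P : C} (k : nat) (f : hom A B)
    (p : nat -> hom P A) : Prop :=
  (forall i j, i < k -> j < k -> f ∘ p i = f ∘ p j) /\
  forall (Z : C) (u : nat -> hom Z A),
    (forall i j, i < k -> j < k -> f ∘ u i = f ∘ u j) ->
    exists h : hom Z P, (forall i, i < k -> p i ∘ h = u i) /\
      forall h' : hom Z P, (forall i, i < k -> p i ∘ h' = u i) -> h' = h.

(** * Tangent structure (Rosicky, with negatives).
   Maps into (chosen) pullbacks are described by their projections: an axiom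
   "... = ... o h" is quantified over all [h] with the prescribed projections
   (such [h] exists and is unique by the pullback property). *)
Record Tangent (C : Cat) := {
  T : C -> C;
  Tm : forall {A B : C}, hom A B -> hom (T A) (T B);
  Tm_id : forall A : C, Tm (@idm C A) = @idm C (T A);
  Tm_comp : forall (A B D : C) (g : hom B D) (f : hom A B), Tm (g ∘ f) = Tm g ∘ Tm f;
  tp : forall X : C, hom (T X) X;
  tp_nat : forall (A B : C) (f : hom A B), f ∘ tp A = tp B ∘ Tm f;
  tz : forall X : C, hom X (T X);
  tz_nat : forall (A B : C) (f : hom A B), Tm f ∘ tz A = tz B ∘ f;
  T2 : C -> C;
  t2p1 : forall X : C, hom (T2 X) (T X);
  t2p2 : forall X : C, hom (T2 X) (T X);
  t2_pb : forall X : C, is_pb (tp X) (tp X) (t2p1 X) (t2p2 X);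
  tplus : forall X : C, hom (T2 X) (T X);
  tplus_nat : forall (A B : C) (f : hom A B) (h : hom (T2 A) (T2 B)),
     t2p1 B ∘ h = Tm f ∘ t2p1 A -> t2p2 B ∘ h = Tm f ∘ t2p2 A ->
     Tm f ∘ tplus A = tplus B ∘ h;
  tneg : forall X : C, hom (T X) (T X);
  tl : forall X : C, hom (T X) (T (T X));
  tl_nat : forall (A B : C) (f : hom A B), Tm (Tm f) ∘ tl A = tl B ∘ Tm f;
  tt : forall X : C, hom (T (T X)) (T (T X));
  tt_nat : forall (A B : C) (f : hom A B), Tm (Tm f) ∘ tt A = tt B ∘ Tm (Tm f);
  ax_T1 : forall (X : C) (k : nat), 1 <= k ->
     exists (P : C) (p : nat -> hom P (T X)),
       is_wide_pb k (tp X) p /\ is_wide_pb k (Tm (tp X)) (fun i => Tm (p i));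
  (* (T2) abelian group object (pi, 0, +, neg) in C/X *)
  ax_zero_sec : forall X : C, tp X ∘ tz X = idm;
  ax_plus_over : forall X : C, tp X ∘ tplus X = tp X ∘ t2p1 X;
  ax_neg_over : forall X : C, tp X ∘ tneg X = tp X;
  ax_plus_unit : forall (X : C) (h : hom (T X) (T2 X)),
     t2p1 X ∘ h = tz X ∘ tp X -> t2p2 X ∘ h = idm -> tplus X ∘ h = idm;
  ax_plus_inv : forall (X : C) (h : hom (T X) (T2 X)),
     t2p1 X ∘ h = idm -> t2p2 X ∘ h = tneg X -> tplus X ∘ h = tz X ∘ tp X;
  ax_plus_comm : forall (X : C) (h : hom (T2 X) (T2 X)),
     t2p1 X ∘ h = t2p2 X -> t2p2 X ∘ h = t2p1 X -> tplus X ∘ h = tplus X;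
  ax_plus_assoc : forall (X Z : C) (a b c : hom Z (T X)) (hab hbc h1 h2 : hom Z (T2 X)),
     t2p1 X ∘ hab = a -> t2p2 X ∘ hab = b -> t2p1 X ∘ hbc = b -> t2p2 X ∘ hbc = c ->
     t2p1 X ∘ h1 = tplus X ∘ hab -> t2p2 X ∘ h1 = c ->
     t2p1 X ∘ h2 = a -> t2p2 X ∘ h2 = tplus X ∘ hbc ->
     tplus X ∘ h1 = tplus X ∘ h2;
  ax_tt_invol : forall X : C, tt X ∘ tt X = idm;
  ax_tt_YB : forall X : C,
     tt (T X) ∘ Tm (tt X) ∘ tt (T X) = Tm (tt X) ∘ tt (T X) ∘ Tm (tt X);
  ax_tt_proj : forall X : C, tp (T X) ∘ tt X = Tm (tp X);
  ax_tt_add : forall (X : C) (h : hom (T (T2 X)) (T2 (T X))),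
     t2p1 (T X) ∘ h = tt X ∘ Tm (t2p1 X) -> t2p2 (T X) ∘ h = tt X ∘ Tm (t2p2 X) ->
     tt X ∘ Tm (tplus X) = tplus (T X) ∘ h;
  ax_tl_proj : forall X : C, tp (T X) ∘ tl X = tz X ∘ tp X;
  ax_tl_coassoc : forall X : C, tl (T X) ∘ tl X = Tm (tl X) ∘ tl X;
  ax_tl_add : forall (X : C) (h : hom (T2 X) (T2 (T X))),
     t2p1 (T X) ∘ h = tl X ∘ t2p1 X -> t2p2 (T X) ∘ h = tl X ∘ t2p2 X ->
     tl X ∘ tplus X = tplus (T X) ∘ h;
  ax_tt_tl : forall X : C, tt X ∘ tl X = tl X;
  ax_tt_tl2 : forall X : C, Tm (tt X) ∘ tt (T X) ∘ Tm (tl X) = tl (T X) ∘ tt X;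
  ax_T6 : forall (X : C) (zz : hom X (T2 X)) (pp : hom (T (T X)) (T2 X)),
     t2p1 X ∘ zz = tz X -> t2p2 X ∘ zz = tz X ->
     t2p1 X ∘ pp = tp (T X) -> t2p2 X ∘ pp = Tm (tp X) ->
     is_pb zz pp (tp X) (tl X)
}.
Arguments T {C} _ X.
Arguments Tm {C} _ {A B} f.
Arguments tp {C} _ X.
Arguments tz {C} _ X.
Arguments T2 {C} _ X.
Arguments t2p1 {C} _ X.
Arguments t2p2 {C} _ X.
Arguments tplus {C} _ X.
Arguments tneg {C} _ X.
Arguments tl {C} _ X.
Arguments tt {C} _ X.

Fixpoint Tn {C : Cat} (TS : Tangent C) (n : nat) (X : C) : C :=
  match n with 0 => X | S n' => Tn TS n' (T TS X) end.

Fixpoint Tmn {C : Cat} (TS : Tangent C) (n : nat) {A B : C} (f : hom A B)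
    : hom (Tn TS n A) (Tn TS n B) :=
  match n with 0 => f | S n' => Tmn TS n' (Tm TS f) end.

Fixpoint zn {C : Cat} (TS : Tangent C) (n : nat) (X : C) : hom X (Tn TS n X) :=
  match n with
  | 0 => idm
  | S n' => Tmn TS n' (tz TS X) ∘ zn TS n' X
  end.

(** * Groupoid objects.  [Gn k] is G_k (G_0, G_1 the objects/arrows), with
   G_{k+1} = G_1 x^{s,t_k}_{G_0} G_k for k >= 1, and t_k as in the paper. *)
Record Groupoid (C : Cat) := {
  Gn : nat -> C;
  gs : hom (Gn 1) (Gn 0);
  gt : hom (Gn 1) (Gn 0);
  tk : forall k : nat, hom (Gn k) (Gn 0);
  gpr1 : forall k : nat, hom (Gn (S k)) (Gn 1);
  gpr2 : forall k : nat, hom (Gn (S k)) (Gn k);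
  tk_0 : tk 0 = idm;
  tk_1 : tk 1 = gt;
  tk_S : forall k, 1 <= k -> tk (S k) = gt ∘ gpr1 k;
  G_pb : forall k, 1 <= k -> is_pb gs (tk k) (gpr1 k) (gpr2 k);
  gunit : hom (Gn 0) (Gn 1);
  ginv : hom (Gn 1) (Gn 1);
  gm : hom (Gn 2) (Gn 1);
  ax_sm : gs ∘ gm = gs ∘ gpr2 1;
  ax_tm : gt ∘ gm = gt ∘ gpr1 1;
  ax_su : gs ∘ gunit = idm;
  ax_tu : gt ∘ gunit = idm;
  ax_si : gs ∘ ginv = gt;
  ax_assoc : forall (h k l : hom (Gn 3) (Gn 2)),
     gpr1 1 ∘ h = gpr1 2 -> gpr2 1 ∘ h = gm ∘ gpr2 2 ->
     gpr1 1 ∘ k = gpr1 2 -> gpr2 1 ∘ k = gpr1 1 ∘ gpr2 2 ->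
     gpr1 1 ∘ l = gm ∘ k -> gpr2 1 ∘ l = gpr2 1 ∘ gpr2 2 ->
     gm ∘ h = gm ∘ l;
  ax_unit_l : forall h : hom (Gn 1) (Gn 2),
     gpr1 1 ∘ h = gunit ∘ gt -> gpr2 1 ∘ h = idm -> gm ∘ h = idm;
  ax_unit_r : forall h : hom (Gn 1) (Gn 2),
     gpr1 1 ∘ h = idm -> gpr2 1 ∘ h = gunit ∘ gs -> gm ∘ h = idm;
  ax_inv_r : forall h : hom (Gn 1) (Gn 2),
     gpr1 1 ∘ h = idm -> gpr2 1 ∘ h = ginv -> gm ∘ h = gunit ∘ gt;
  ax_inv_l : forall h : hom (Gn 1) (Gn 2),
     gpr1 1 ∘ h = ginv -> gpr2 1 ∘ h = idm -> gm ∘ h = gunit ∘ gs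
}.
Arguments Gn {C} _ k.
Arguments gs {C} _.
Arguments gt {C} _.
Arguments tk {C} _ k.
Arguments gpr1 {C} _ k.
Arguments gpr2 {C} _ k.
Arguments gunit {C} _.
Arguments ginv {C} _.
Arguments gm {C} _.

Record RBundle {C : Cat} (G : Groupoid C) := {
  bE : C;
  br : hom bE (Gn G 0);
  EG : nat -> C;
  epr1 : forall k : nat, hom (EG k) bE;
  epr2 : forall k : nat, hom (EG k) (Gn G k);
  EG_pb : forall k, 1 <= k -> is_pb br (tk G k) (epr1 k) (epr2 k);
  bact : hom (EG 1) bE;
  ax_ract : br ∘ bact = gs G ∘ epr2 1;
  ax_runit : forall h : hom bE (EG 1),
     epr1 1 ∘ h = idm -> epr2 1 ∘ h = gunit G ∘ br -> bact ∘ h = idm;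
  ax_rassoc : forall (h k l : hom (EG 2) (EG 1)),
     epr1 1 ∘ h = epr1 2 -> epr2 1 ∘ h = gm G ∘ epr2 2 ->
     epr1 1 ∘ k = epr1 2 -> epr2 1 ∘ k = gpr1 G 1 ∘ epr2 2 ->
     epr1 1 ∘ l = bact ∘ k -> epr2 1 ∘ l = gpr2 G 1 ∘ epr2 2 ->
     bact ∘ h = bact ∘ l
}.
Arguments bE {C G} _.
Arguments br {C G} _.
Arguments EG {C G} _ k.
Arguments epr1 {C G} _ k.
Arguments epr2 {C G} _ k.
Arguments bact {C G} _.

Definition differentiable_groupoid {C : Cat} (TS : Tangent C) (G : Groupoid C) : Prop :=
  forall n m k : nat, 1 <= n -> 2 <= m ->
   has_pb (Tmn TS n (gs G)) (Tmn TS n (tk G k)) /\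
   has_pb (Tmn TS n (gs G)) (zn TS n (Gn G 0) ∘ tk G k) /\
   (forall (P1 P0 : C) (q1 : nat -> hom P1 (T TS (Gn G 1)))
       (q0 : nat -> hom P0 (T TS (Gn G 0))) (Tms : hom P1 P0) (zm : hom (Gn G 0) P0),
       is_wide_pb m (tp TS (Gn G 1)) q1 -> is_wide_pb m (tp TS (Gn G 0)) q0 ->
       (forall i, i < m -> q0 i ∘ Tms = Tm TS (gs G) ∘ q1 i) ->
       (forall i, i < m -> q0 i ∘ zm = tz TS (Gn G 0)) ->
       has_pb Tms (zm ∘ tk G k)) /\
   (forall (Q : C) (q1 : hom Q (T TS (Gn G 1))) (q2 : hom Q (Gn G 0)),
       is_pb (Tm TS (gs G)) (tz TS (Gn G 0)) q1 q2 ->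
       has_pb (gunit G) (tp TS (Gn G 1) ∘ q1)) /\
   (forall (P : C) (p1 : hom P (Gn G 1)) (p2 : hom P (Gn G k)),
       is_pb (gs G) (tk G k) p1 p2 ->
       is_pb (Tmn TS n (gs G)) (Tmn TS n (tk G k)) (Tmn TS n p1) (Tmn TS n p2)).

Arguments differentiable_groupoid {C} TS G.

Definition differentiable_bundle {C : Cat} (TS : Tangent C) {G : Groupoid C}
    (E : RBundle G) : Prop :=
  differentiable_groupoid TS G /\
  forall n m k : nat, 1 <= n -> 2 <= m ->
   has_pb (Tmn TS n (br E)) (Tmn TS n (tk G k)) /\
   has_pb (Tmn TS n (br E)) (zn TS n (Gn G 0) ∘ tk G k) /\
   (forall (P1 P0 : C) (q1 : nat -> hom P1 (T TS (bE E)))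
       (q0 : nat -> hom P0 (T TS (Gn G 0))) (Tmr : hom P1 P0) (zm : hom (Gn G 0) P0),
       is_wide_pb m (tp TS (bE E)) q1 -> is_wide_pb m (tp TS (Gn G 0)) q0 ->
       (forall i, i < m -> q0 i ∘ Tmr = Tm TS (br E) ∘ q1 i) ->
       (forall i, i < m -> q0 i ∘ zm = tz TS (Gn G 0)) ->
       has_pb Tmr (zm ∘ tk G k)) /\
   (forall (P : C) (p1 : hom P (bE E)) (p2 : hom P (Gn G k)),
       is_pb (br E) (tk G k) p1 p2 ->
       is_pb (Tmn TS n (br E)) (Tmn TS n (tk G k)) (Tmn TS n p1) (Tmn TS n p2)).

Arguments differentiable_bundle {C} TS {G} E.

(** * Vertical bundle VE with its G-action.
   - [VE] = TE x^{Tr, 0_{G_0}}_{TG_0} G_0 with projections [iV], [rV];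
   - [TEG] = TE x^{Tr,Tt}_{TG_0} TG_1 with projections [q1], [q2];
   - [bTE] = beta_{TE} = T(beta_E) o nu^{-1}, characterized by [bTE o nu = T beta_E];
   - [VEG] = VE x^{r_VE, t}_{G_0} G_1 with projections [w1], [w2];
   - [bVE] = beta_{VE}: the unique map with i o bVE = beta_TE o (i x 0_{G_1})
     lying over s o pr2. *)
Record VData {C : Cat} (TS : Tangent C) {G : Groupoid C} (E : RBundle G) := {
  VE : C;
  iV : hom VE (T TS (bE E));
  rV : hom VE (Gn G 0);
  VE_pb : is_pb (Tm TS (br E)) (tz TS (Gn G 0)) iV rV;
  TEG : C;
  q1 : hom TEG (T TS (bE E));
  q2 : hom TEG (T TS (Gn G 1));
  TEG_pb : is_pb (Tm TS (br E)) (Tm TS (gt G)) q1 q2;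
  bTE : hom TEG (T TS (bE E));
  bTE_spec : forall nu : hom (T TS (EG E 1)) TEG,
     q1 ∘ nu = Tm TS (epr1 E 1) -> q2 ∘ nu = Tm TS (epr2 E 1) ->
     bTE ∘ nu = Tm TS (bact E);
  VEG : C;
  w1 : hom VEG VE;
  w2 : hom VEG (Gn G 1);
  VEG_pb : is_pb rV (gt G) w1 w2;
  bVE : hom VEG VE;
  bVE_spec : forall j : hom VEG TEG,
     q1 ∘ j = iV ∘ w1 -> q2 ∘ j = tz TS (Gn G 1) ∘ w2 -> iV ∘ bVE = bTE ∘ j;
  bVE_over : rV ∘ bVE = gs G ∘ w2
}.
Arguments VE {C TS G E} _.
Arguments iV {C TS G E} _.
Arguments rV {C TS G E} _.
Arguments VEG {C TS G E} _.
Arguments w1 {C TS G E} _.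
Arguments w2 {C TS G E} _.
Arguments bVE {C TS G E} _.

Definition vector_field {C : Cat} (TS : Tangent C) (X : C) (v : hom X (T TS X)) : Prop :=
  tp TS X ∘ v = idm.
Arguments vector_field {C} TS X v.

(** Invariant vector fields: v = i_VE o v' with v' : E -> VE G-equivariant. *)
Definition invariant_vf {C : Cat} {TS : Tangent C} {G : Groupoid C} {E : RBundle G}
    (D : VData TS E) (v : hom (bE E) (T TS (bE E))) : Prop :=
  vector_field TS (bE E) v /\
  exists v' : hom (bE E) (VE D),
    iV D ∘ v' = v /\
    rV D ∘ v' = br E /\
    (forall kk : hom (EG E 1) (VEG D),
       w1 D ∘ kk = v' ∘ epr1 E 1 -> w2 D ∘ kk = epr2 E 1 ->
       bVE D ∘ kk = v' ∘ bact E).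

(** Lie bracket: [u] is [v,w], i.e. u is a vector field with
    delta(v,w) = lambda_2 o (w,u), where
    delta(v,w) = (Tw o v) -_{TX} (tau o Tv o w) = + o (Tw o v, neg o tau o Tv o w)
    and lambda_2 = tau o +_{TX} o (T0 x_0 lambda). *)
Definition is_bracket {C : Cat} (TS : Tangent C) (X : C) (v w u : hom X (T TS X)) : Prop :=
  vector_field TS X u /\
  forall (b : hom X (T2 TS (T TS X))) (c : hom X (T2 TS X))
         (l : hom (T2 TS X) (T2 TS (T TS X))),
    t2p1 TS (T TS X) ∘ b = Tm TS w ∘ v ->
    t2p2 TS (T TS X) ∘ b = tneg TS (T TS X) ∘ (tt TS X ∘ (Tm TS v ∘ w)) ->
    t2p1 TS X ∘ c = w -> t2p2 TS X ∘ c = u ->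
    t2p1 TS (T TS X) ∘ l = Tm TS (tz TS X) ∘ t2p1 TS X ->
    t2p2 TS (T TS X) ∘ l = tl TS X ∘ t2p2 TS X ->
    tplus TS (T TS X) ∘ b = tt TS X ∘ tplus TS (T TS X) ∘ l ∘ c.
Arguments is_bracket {C} TS X v w u.

(* Invariance of a vertical vector field v on E is a relatedness condition:
   with v ⊕ 0 the vector field on E ×_{G_0} G_1 induced by v and the zero
   field on G_1 (it exists because T preserves this pullback), v is invariant
   iff v ⊕ 0 is β-related to v, where β is the action.  Vector fields related
   along a fixed map are closed under 0, +, negation and the bracket, the
   latter because δ(v, w) = λ_2 ∘ (w, [v, w]) is natural and λ_2 is
   injective in its second argument (axiom (T6)).  Since T² also preserves
   the pullback, [v ⊕ 0, w ⊕ 0] = [v, w] ⊕ 0, and the bracket case follows. *)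

From Stdlib Require Import ClassicalEpsilon.

Section Pullbacks.
Context {C : Cat} {A B D P : C} {f : hom A D} {g : hom B D}
  {p1 : hom P A} {p2 : hom P B}.
Hypothesis Hpb : is_pb f g p1 p2.

Lemma pb_square {Z : C} (r : hom Z P) : f ∘ (p1 ∘ r) = g ∘ (p2 ∘ r).
Proof. destruct Hpb as [Hc _]. rewrite !comp_assoc, Hc. reflexivity. Qed.

Lemma pb_lift {Z : C} (u : hom Z A) (v : hom Z B) :
  f ∘ u = g ∘ v -> exists h, p1 ∘ h = u /\ p2 ∘ h = v.
Proof.
  intros E. destruct Hpb as [_ Hu]. destruct (Hu Z u v E) as [h [Hh _]]. eauto.
Qed.

Lemma pb_jointly_monic {Z : C} (h h' : hom Z P) :
  p1 ∘ h = p1 ∘ h' -> p2 ∘ h = p2 ∘ h' -> h = h'.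
Proof.
  intros E1 E2. destruct Hpb as [_ Hu].
  destruct (Hu Z _ _ (pb_square h)) as [k [_ Hk]].
  rewrite (Hk h eq_refl eq_refl), (Hk h' (eq_sym E1) (eq_sym E2)). reflexivity.
Qed.

End Pullbacks.

Section FibreAddition.
Context {C : Cat} (TS : Tangent C).

Lemma tp_tz {X Z : C} (p : hom Z X) : tp TS X ∘ (tz TS X ∘ p) = p.
Proof. rewrite comp_assoc, ax_zero_sec, comp_idl. reflexivity. Qed.

Lemma vector_field_tz (Y : C) : vector_field TS Y (tz TS Y).
Proof. apply ax_zero_sec. Qed.

Lemma tp_tneg {X Z : C} (a : hom Z (T TS X)) : tp TS X ∘ (tneg TS X ∘ a) = tp TS X ∘ a.
Proof. rewrite comp_assoc, ax_neg_over. reflexivity. Qed.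

Lemma tp_Tm {A B Z : C} (f : hom A B) (a : hom Z (T TS A)) :
  tp TS B ∘ (Tm TS f ∘ a) = f ∘ (tp TS A ∘ a).
Proof. rewrite !comp_assoc, tp_nat. reflexivity. Qed.

Lemma T2_square (X : C) : tp TS X ∘ t2p1 TS X = tp TS X ∘ t2p2 TS X.
Proof. exact (proj1 (t2_pb TS X)). Qed.

Lemma T2_inhabited {X Z : C} (a : hom Z (T TS X)) : inhabited (hom Z (T2 TS X)).
Proof.
  destruct (pb_lift (t2_pb TS X) idm idm eq_refl) as [d _].
  exact (inhabits (d ∘ a)).
Qed.

(* The pairing (a, b) into T_2 X; it is junk unless [a] and [b] lie over the
   same map into X. *)
Definition tpair {X Z : C} (a b : hom Z (T TS X)) : hom Z (T2 TS X) :=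
  epsilon (T2_inhabited a) (fun h => t2p1 TS X ∘ h = a /\ t2p2 TS X ∘ h = b).

Lemma tpair_spec {X Z : C} (a b : hom Z (T TS X)) : tp TS X ∘ a = tp TS X ∘ b ->
  t2p1 TS X ∘ tpair a b = a /\ t2p2 TS X ∘ tpair a b = b.
Proof. intros Hab. unfold tpair. apply epsilon_spec. exact (pb_lift (t2_pb TS X) a b Hab). Qed.

Lemma tpair_fst {X Z : C} (a b : hom Z (T TS X)) : tp TS X ∘ a = tp TS X ∘ b ->
  t2p1 TS X ∘ tpair a b = a.
Proof. intros Hab. exact (proj1 (tpair_spec _ _ Hab)). Qed.

Lemma tpair_snd {X Z : C} (a b : hom Z (T TS X)) : tp TS X ∘ a = tp TS X ∘ b ->
  t2p2 TS X ∘ tpair a b = b.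
Proof. intros Hab. exact (proj2 (tpair_spec _ _ Hab)). Qed.

Lemma tpair_comp {X Z W : C} (a b : hom Z (T TS X)) (f : hom W Z) :
  tp TS X ∘ a = tp TS X ∘ b -> tpair a b ∘ f = tpair (a ∘ f) (b ∘ f).
Proof.
  intros Hab.
  assert (Hf : tp TS X ∘ (a ∘ f) = tp TS X ∘ (b ∘ f))
    by (rewrite !comp_assoc, Hab; reflexivity).
  apply (pb_jointly_monic (t2_pb TS X));
    rewrite comp_assoc, ?(tpair_fst _ _ Hab), ?(tpair_snd _ _ Hab),
      ?(tpair_fst _ _ Hf), ?(tpair_snd _ _ Hf);
    reflexivity.
Qed.

Lemma tpair_unique {X Z : C} (a b : hom Z (T TS X)) (h : hom Z (T2 TS X)) :
  t2p1 TS X ∘ h = a -> t2p2 TS X ∘ h = b -> h = tpair a b.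
Proof.
  intros E1 E2.
  assert (Hab : tp TS X ∘ a = tp TS X ∘ b).
  { subst. apply (pb_square (t2_pb TS X)). }
  apply (pb_jointly_monic (t2_pb TS X)); rewrite ?tpair_fst, ?tpair_snd; auto.
Qed.

Definition tadd {X Z : C} (a b : hom Z (T TS X)) : hom Z (T TS X) :=
  tplus TS X ∘ tpair a b.

Section Addition.
Context {X Z : C}.
Implicit Types a b c x y : hom Z (T TS X).

Lemma tadd_comp {W : C} a b (f : hom W Z) :
  tp TS X ∘ a = tp TS X ∘ b -> tadd a b ∘ f = tadd (a ∘ f) (b ∘ f).
Proof. intros H. unfold tadd. rewrite <- comp_assoc, tpair_comp; auto. Qed.

Lemma tp_tadd a b : tp TS X ∘ a = tp TS X ∘ b -> tp TS X ∘ tadd a b = tp TS X ∘ a.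
Proof.
  intros H. unfold tadd.
  rewrite comp_assoc, ax_plus_over, <- comp_assoc, tpair_fst; auto.
Qed.

(* Each group law is an axiom on the universal pair, precomposed with a pairing. *)
Lemma tadd0l b : tadd (tz TS X ∘ (tp TS X ∘ b)) b = b.
Proof.
  assert (H0 : tp TS X ∘ (tz TS X ∘ tp TS X) = tp TS X ∘ idm)
    by (rewrite tp_tz, comp_idr; reflexivity).
  assert (E : tpair (tz TS X ∘ (tp TS X ∘ b)) b = tpair (tz TS X ∘ tp TS X) idm ∘ b)
    by (rewrite tpair_comp, comp_idl, comp_assoc; auto).
  unfold tadd. rewrite E, comp_assoc, ax_plus_unit, comp_idl;
    [reflexivity | apply tpair_fst | apply tpair_snd]; auto.
Qed.

Lemma taddNr a : tadd a (tneg TS X ∘ a) = tz TS X ∘ (tp TS X ∘ a).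
Proof.
  assert (H0 : tp TS X ∘ idm = tp TS X ∘ tneg TS X)
    by (rewrite ax_neg_over, comp_idr; reflexivity).
  assert (E : tpair a (tneg TS X ∘ a) = tpair idm (tneg TS X) ∘ a)
    by (rewrite tpair_comp, comp_idl; auto).
  unfold tadd. rewrite E, comp_assoc, ax_plus_inv, comp_assoc;
    [reflexivity | apply tpair_fst | apply tpair_snd]; auto.
Qed.

Lemma taddC a b : tp TS X ∘ a = tp TS X ∘ b -> tadd a b = tadd b a.
Proof.
  intros H.
  assert (H0 : tp TS X ∘ t2p2 TS X = tp TS X ∘ t2p1 TS X) by (symmetry; apply T2_square).
  assert (E : tpair b a = tpair (t2p2 TS X) (t2p1 TS X) ∘ tpair a b)
    by (rewrite tpair_comp, tpair_fst, tpair_snd; auto).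
  unfold tadd. rewrite E, comp_assoc, ax_plus_comm;
    [reflexivity | apply tpair_fst | apply tpair_snd]; auto.
Qed.

Lemma taddA a b c : tp TS X ∘ a = tp TS X ∘ b -> tp TS X ∘ b = tp TS X ∘ c ->
  tadd (tadd a b) c = tadd a (tadd b c).
Proof.
  intros H1 H2.
  assert (H3 : tp TS X ∘ tadd a b = tp TS X ∘ c) by (rewrite tp_tadd; congruence).
  assert (H4 : tp TS X ∘ a = tp TS X ∘ tadd b c) by (rewrite tp_tadd; congruence).
  unfold tadd.
  apply (ax_plus_assoc (a := a) (b := b) (c := c) (hab := tpair a b) (hbc := tpair b c));
    apply tpair_fst || apply tpair_snd; auto.
Qed.

Lemma tadd0r b : tadd b (tz TS X ∘ (tp TS X ∘ b)) = b.
Proof. rewrite taddC, tadd0l; [reflexivity | rewrite tp_tz; reflexivity]. Qed.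

Lemma tadd_cancel a x y : tp TS X ∘ a = tp TS X ∘ x -> tp TS X ∘ a = tp TS X ∘ y ->
  tadd a x = tadd a y -> x = y.
Proof.
  assert (HK : forall x, tp TS X ∘ a = tp TS X ∘ x -> tadd (tneg TS X ∘ a) (tadd a x) = x).
  { intros x' H. rewrite <- taddA, (taddC _ a), taddNr, H, tadd0l;
      rewrite ?tp_tneg; congruence. }
  intros Hx Hy E. rewrite <- (HK x Hx), <- (HK y Hy), E. reflexivity.
Qed.

Lemma tneg_unique a c : tp TS X ∘ a = tp TS X ∘ c ->
  tadd a c = tz TS X ∘ (tp TS X ∘ a) -> c = tneg TS X ∘ a.
Proof.
  intros H E. apply (tadd_cancel a); rewrite ?tp_tneg, ?E, ?taddNr; auto.
Qed.

End Addition.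

Lemma tadd_tz {X Z : C} (p : hom Z X) : tadd (tz TS X ∘ p) (tz TS X ∘ p) = tz TS X ∘ p.
Proof. pose proof (tadd0l (tz TS X ∘ p)) as H. rewrite tp_tz in H. exact H. Qed.

Lemma tneg_tz {X Z : C} (p : hom Z X) : tneg TS X ∘ (tz TS X ∘ p) = tz TS X ∘ p.
Proof. symmetry. apply tneg_unique; rewrite tp_tz; [reflexivity | apply tadd_tz]. Qed.

Lemma Tm_tadd {A B Z : C} (f : hom A B) (a b : hom Z (T TS A)) :
  tp TS A ∘ a = tp TS A ∘ b ->
  Tm TS f ∘ tadd a b = tadd (Tm TS f ∘ a) (Tm TS f ∘ b).
Proof.
  intros H.
  assert (Hf : tp TS B ∘ (Tm TS f ∘ t2p1 TS A) = tp TS B ∘ (Tm TS f ∘ t2p2 TS A))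
    by (rewrite !tp_Tm, T2_square; reflexivity).
  unfold tadd.
  rewrite comp_assoc, (tplus_nat (tpair_fst _ _ Hf) (tpair_snd _ _ Hf)),
    <- comp_assoc, tpair_comp, <- !comp_assoc, tpair_fst, tpair_snd; auto.
Qed.

Lemma Tm_tneg {A B Z : C} (f : hom A B) (a : hom Z (T TS A)) :
  Tm TS f ∘ (tneg TS A ∘ a) = tneg TS B ∘ (Tm TS f ∘ a).
Proof.
  assert (Hnat : Tm TS f ∘ tneg TS A = tneg TS B ∘ Tm TS f).
  { apply tneg_unique.
    - rewrite tp_Tm, ax_neg_over, tp_nat. reflexivity.
    - pose proof (Tm_tadd f idm (tneg TS A ∘ idm)) as E.
      pose proof (taddNr (idm (A := T TS A))) as I.
      rewrite !comp_idr in E. rewrite !comp_idr in I.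
      rewrite <- E by (rewrite ax_neg_over; reflexivity).
      rewrite I, comp_assoc, tz_nat, <- comp_assoc, tp_nat. reflexivity. }
  rewrite !comp_assoc, Hnat. reflexivity.
Qed.

Lemma tl_tadd {X Z : C} (a b : hom Z (T TS X)) :
  tp TS X ∘ a = tp TS X ∘ b ->
  tl TS X ∘ tadd a b = tadd (tl TS X ∘ a) (tl TS X ∘ b).
Proof.
  intros H.
  assert (Hl : tp TS (T TS X) ∘ (tl TS X ∘ t2p1 TS X) =
               tp TS (T TS X) ∘ (tl TS X ∘ t2p2 TS X))
    by (rewrite !comp_assoc, ax_tl_proj, <- !comp_assoc, T2_square; reflexivity).
  unfold tadd.
  rewrite comp_assoc, (ax_tl_add (tpair_fst _ _ Hl) (tpair_snd _ _ Hl)),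
    <- comp_assoc, tpair_comp, <- !comp_assoc, tpair_fst, tpair_snd; auto.
Qed.

(* λ ∘ 0 is additively idempotent, hence a zero. *)
Lemma tl_tz (X : C) : tl TS X ∘ tz TS X = tz TS (T TS X) ∘ tz TS X.
Proof.
  set (x := tl TS X ∘ tz TS X).
  assert (Hx : tadd x x = x).
  { unfold x. rewrite <- tl_tadd by reflexivity.
    pose proof (tadd_tz (idm (A := X))) as E. rewrite comp_idr in E. rewrite E. reflexivity. }
  assert (Htp : tp TS (T TS X) ∘ x = tz TS X)
    by (unfold x; rewrite comp_assoc, ax_tl_proj, <- comp_assoc, ax_zero_sec, comp_idr;
        reflexivity).
  assert (E : x = tz TS (T TS X) ∘ (tp TS (T TS X) ∘ x)).
  { apply (tadd_cancel x); rewrite ?tp_tz, ?Hx, ?tadd0r; reflexivity. }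
  rewrite E, Htp. reflexivity.
Qed.

End FibreAddition.

Section Bracket.
Context {C : Cat} (TS : Tangent C).

Definition delta (X : C) (v w : hom X (T TS X)) : hom X (T TS (T TS X)) :=
  tadd TS (Tm TS w ∘ v) (tneg TS (T TS X) ∘ (tt TS X ∘ (Tm TS v ∘ w))).

Definition lambda2 (X : C) {Z : C} (a b : hom Z (T TS X)) : hom Z (T TS (T TS X)) :=
  tt TS X ∘ tadd TS (Tm TS (tz TS X) ∘ a) (tl TS X ∘ b).

Lemma delta_summands_over (X : C) (v w : hom X (T TS X)) : vector_field TS X v ->
  tp TS (T TS X) ∘ (Tm TS w ∘ v) =
  tp TS (T TS X) ∘ (tneg TS (T TS X) ∘ (tt TS X ∘ (Tm TS v ∘ w))).
Proof.
  intros Hv. rewrite tp_tneg, tp_Tm, Hv, comp_idr, comp_assoc, ax_tt_proj, comp_assoc,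
    <- Tm_comp, Hv, Tm_id, comp_idl. reflexivity.
Qed.

Lemma lambda2_summands_over {X Z : C} (a b : hom Z (T TS X)) :
  tp TS X ∘ a = tp TS X ∘ b ->
  tp TS (T TS X) ∘ (Tm TS (tz TS X) ∘ a) = tp TS (T TS X) ∘ (tl TS X ∘ b).
Proof. intros H. rewrite tp_Tm, H, !comp_assoc, ax_tl_proj. reflexivity. Qed.

Lemma is_bracket_delta (X : C) (v w u : hom X (T TS X)) :
  vector_field TS X v -> vector_field TS X w -> is_bracket TS X v w u ->
  delta X v w = lambda2 X w u.
Proof.
  intros Hv Hw [Hu H].
  assert (Hwu : tp TS X ∘ w = tp TS X ∘ u) by (rewrite Hw, Hu; reflexivity).
  pose proof (delta_summands_over X v w Hv) as Hb.
  assert (Hl := lambda2_summands_over (t2p1 TS X) (t2p2 TS X) (T2_square TS X)).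
  unfold delta, lambda2, tadd.
  rewrite (H _ _ _ (tpair_fst _ _ _ Hb) (tpair_snd _ _ _ Hb) (tpair_fst _ _ _ Hwu)
             (tpair_snd _ _ _ Hwu) (tpair_fst _ _ _ Hl) (tpair_snd _ _ _ Hl)).
  rewrite <- !comp_assoc, tpair_comp, <- !comp_assoc, tpair_fst, tpair_snd; auto.
Qed.

Lemma delta_Tm {X Y : C} (f : hom X Y) (vX wX : hom X (T TS X)) (vY wY : hom Y (T TS Y)) :
  vector_field TS X vX -> vector_field TS Y vY ->
  Tm TS f ∘ vX = vY ∘ f -> Tm TS f ∘ wX = wY ∘ f ->
  Tm TS (Tm TS f) ∘ delta X vX wX = delta Y vY wY ∘ f.
Proof.
  intros HvX HvY Ev Ew. unfold delta.
  rewrite Tm_tadd, tadd_comp by auto using delta_summands_over.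
  f_equal.
  - rewrite comp_assoc, <- Tm_comp, Ew, Tm_comp, <- comp_assoc, Ev, comp_assoc. reflexivity.
  - rewrite Tm_tneg, <- !comp_assoc. f_equal.
    rewrite !comp_assoc, tt_nat, <- !comp_assoc. f_equal.
    rewrite comp_assoc, <- Tm_comp, Ev, Tm_comp, <- comp_assoc, Ew. reflexivity.
Qed.

Lemma lambda2_Tm {X Y Z : C} (f : hom X Y) (a b : hom Z (T TS X)) :
  tp TS X ∘ a = tp TS X ∘ b ->
  Tm TS (Tm TS f) ∘ lambda2 X a b = lambda2 Y (Tm TS f ∘ a) (Tm TS f ∘ b).
Proof.
  intros H. unfold lambda2.
  rewrite comp_assoc, tt_nat, <- comp_assoc, Tm_tadd by auto using lambda2_summands_over.
  rewrite !comp_assoc, <- Tm_comp, tz_nat, Tm_comp, tl_nat. reflexivity.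
Qed.

Lemma lambda2_comp {X Z W : C} (a b : hom Z (T TS X)) (g : hom W Z) :
  tp TS X ∘ a = tp TS X ∘ b -> lambda2 X a b ∘ g = lambda2 X (a ∘ g) (b ∘ g).
Proof.
  intros H. unfold lambda2.
  rewrite <- comp_assoc, tadd_comp, <- !comp_assoc by auto using lambda2_summands_over.
  reflexivity.
Qed.

Lemma tt_inj {X Z : C} (a b : hom Z (T TS (T TS X))) : tt TS X ∘ a = tt TS X ∘ b -> a = b.
Proof.
  intros H.
  rewrite <- (comp_idl a), <- (comp_idl b), <- (ax_tt_invol TS X), <- !comp_assoc, H.
  reflexivity.
Qed.

(* Injectivity of λ_2 in its second argument: after cancelling τ and T0 ∘ a,
   it is the injectivity of λ given by the pullback (T6). *)
Lemma lambda2_cancel {X Z : C} (a x y : hom Z (T TS X)) :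
  tp TS X ∘ a = tp TS X ∘ x -> tp TS X ∘ a = tp TS X ∘ y ->
  lambda2 X a x = lambda2 X a y -> x = y.
Proof.
  intros Hx Hy E. unfold lambda2 in E. apply tt_inj, tadd_cancel in E;
    auto using lambda2_summands_over.
  assert (H0 : tp TS X ∘ tz TS X = tp TS X ∘ tz TS X) by reflexivity.
  assert (Hp : tp TS X ∘ tp TS (T TS X) = tp TS X ∘ Tm TS (tp TS X)) by apply tp_nat.
  apply (pb_jointly_monic (ax_T6 (tpair_fst _ _ _ H0) (tpair_snd _ _ _ H0)
                                 (tpair_fst _ _ _ Hp) (tpair_snd _ _ _ Hp))); congruence.
Qed.

Lemma delta_tz_lambda2 (X : C) : delta X (tz TS X) (tz TS X) = lambda2 X (tz TS X) (tz TS X).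
Proof.
  assert (Ht : tt TS X ∘ (tz TS (T TS X) ∘ tz TS X) = tz TS (T TS X) ∘ tz TS X)
    by (rewrite <- tl_tz, comp_assoc, ax_tt_tl; reflexivity).
  unfold delta, lambda2. rewrite tz_nat, Ht, taddNr, tp_tz, tl_tz, tadd_tz, Ht. reflexivity.
Qed.

End Bracket.

Section Related.
Context {C : Cat} (TS : Tangent C) {X Y : C} (f : hom X Y).

Definition related (vX : hom X (T TS X)) (vY : hom Y (T TS Y)) : Prop :=
  Tm TS f ∘ vX = vY ∘ f.

Lemma related_tz : related (tz TS X) (tz TS Y).
Proof. apply tz_nat. Qed.

Lemma related_tadd (vX wX : hom X (T TS X)) (vY wY : hom Y (T TS Y)) :
  tp TS X ∘ vX = tp TS X ∘ wX -> tp TS Y ∘ vY = tp TS Y ∘ wY ->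
  related vX vY -> related wX wY -> related (tadd TS vX wX) (tadd TS vY wY).
Proof.
  unfold related. intros HX HY Ev Ew. rewrite Tm_tadd, Ev, Ew, tadd_comp; auto.
Qed.

Lemma related_tneg (vX : hom X (T TS X)) (vY : hom Y (T TS Y)) :
  related vX vY -> related (tneg TS X ∘ vX) (tneg TS Y ∘ vY).
Proof. unfold related. intros Ev. rewrite Tm_tneg, Ev, comp_assoc. reflexivity. Qed.

Lemma related_tadd_tz (vX wX : hom X (T TS X)) :
  tp TS X ∘ vX = tp TS X ∘ wX ->
  related vX (tz TS Y) -> related wX (tz TS Y) -> related (tadd TS vX wX) (tz TS Y).
Proof.
  intros H Rv Rw. pose proof (tadd_tz TS (idm (A := Y))) as Hz. rewrite comp_idr in Hz.
  rewrite <- Hz. apply related_tadd; rewrite ?Hz; auto.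
Qed.

Lemma related_tneg_tz (vX : hom X (T TS X)) :
  related vX (tz TS Y) -> related (tneg TS X ∘ vX) (tz TS Y).
Proof.
  intros Rv. pose proof (tneg_tz TS (idm (A := Y))) as Hz. rewrite !comp_idr in Hz.
  rewrite <- Hz. apply related_tneg, Rv.
Qed.

Section Brackets.
Variables (vX wX uX : hom X (T TS X)) (vY wY uY : hom Y (T TS Y)).
Hypotheses (HvX : vector_field TS X vX) (HvY : vector_field TS Y vY)
  (HwY : vector_field TS Y wY) (HuY : vector_field TS Y uY).
Hypotheses (Rv : related vX vY) (Rw : related wX wY).
Hypothesis BY : delta TS Y vY wY = lambda2 TS Y wY uY.

Lemma Tm_delta_related :
  Tm TS (Tm TS f) ∘ delta TS X vX wX = lambda2 TS Y (wY ∘ f) (uY ∘ f).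
Proof.
  rewrite (delta_Tm TS f vX wX vY wY HvX HvY Rv Rw), BY, lambda2_comp; auto.
  rewrite HwY, HuY. reflexivity.
Qed.

Lemma related_bracket :
  vector_field TS X wX -> vector_field TS X uX ->
  delta TS X vX wX = lambda2 TS X wX uX -> related uX uY.
Proof.
  intros HwX HuX BX. unfold related.
  assert (Hf : tp TS Y ∘ (wY ∘ f) = f) by (rewrite comp_assoc, HwY, comp_idl; reflexivity).
  assert (Hu : tp TS Y ∘ (Tm TS f ∘ uX) = f) by (rewrite tp_Tm, HuX, comp_idr; reflexivity).
  apply (lambda2_cancel TS (wY ∘ f)).
  - rewrite Hf, Hu. reflexivity.
  - rewrite Hf, comp_assoc, HuY, comp_idl. reflexivity.
  - transitivity (Tm TS (Tm TS f) ∘ lambda2 TS X wX uX).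
    + rewrite lambda2_Tm, Rw; [reflexivity|]. rewrite HwX, HuX. reflexivity.
    + rewrite <- BX. apply Tm_delta_related.
Qed.

End Brackets.

End Related.

Section InvariantVectorFields.
Context {C : Cat} {TS : Tangent C} {G : Groupoid C} {E : RBundle G} (D : VData TS E).

Definition vertical (v : hom (bE E) (T TS (bE E))) : Prop :=
  related TS (br E) v (tz TS (Gn G 0)).

Definition action_lift (v : hom (bE E) (T TS (bE E))) (M : hom (EG E 1) (T TS (EG E 1))) :=
  related TS (epr1 E 1) M v /\ related TS (epr2 E 1) M (tz TS (Gn G 1)).

Lemma action_square : br E ∘ epr1 E 1 = gt G ∘ epr2 E 1.
Proof. pose proof (proj1 (EG_pb E (le_n 1))) as Hc. rewrite tk_1 in Hc. exact Hc. Qed.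

Lemma invariant_vertical {v : hom (bE E) (T TS (bE E))} : invariant_vf D v -> vertical v.
Proof.
  intros [_ [v' [Hi [Hr _]]]]. unfold vertical, related.
  rewrite <- Hi, (pb_square (VE_pb D)), Hr. reflexivity.
Qed.

Lemma bTE_Tm {Z : C} (j : hom Z (TEG D)) (N : hom Z (T TS (EG E 1))) :
  q1 D ∘ j = Tm TS (epr1 E 1) ∘ N -> q2 D ∘ j = Tm TS (epr2 E 1) ∘ N ->
  bTE D ∘ j = Tm TS (bact E) ∘ N.
Proof.
  intros E1 E2.
  assert (Hc : Tm TS (br E) ∘ Tm TS (epr1 E 1) = Tm TS (gt G) ∘ Tm TS (epr2 E 1))
    by (rewrite <- !Tm_comp, action_square; reflexivity).
  destruct (pb_lift (TEG_pb D) _ _ Hc) as [nu [N1 N2]].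
  assert (Ej : j = nu ∘ N)
    by (apply (pb_jointly_monic (TEG_pb D)); rewrite comp_assoc, ?N1, ?N2; auto).
  rewrite Ej, comp_assoc, (bTE_spec N1 N2). reflexivity.
Qed.

(* Equivariance of v' : E → VE, pushed through the monomorphism i_VE, is the
   statement that the action map relates v ⊕ 0 to v. *)
Lemma invariant_vf_iff_related
    {v : hom (bE E) (T TS (bE E))} {M : hom (EG E 1) (T TS (EG E 1))} :
  vector_field TS _ v -> vertical v -> action_lift v M ->
  (invariant_vf D v <-> related TS (bact E) M v).
Proof.
  intros Hv Hvert [M1 M2]. unfold related in *.
  assert (Hj : Tm TS (br E) ∘ (iV D ∘ w1 D) = Tm TS (gt G) ∘ (tz TS _ ∘ w2 D)).
  { rewrite (pb_square (VE_pb D)), (proj1 (VEG_pb D)), !comp_assoc, tz_nat. reflexivity. }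
  destruct (pb_lift (TEG_pb D) _ _ Hj) as [j [J1 J2]].
  assert (Hkey : forall (v' : hom (bE E) (VE D)) (kk : hom (EG E 1) (VEG D)),
     iV D ∘ v' = v -> w1 D ∘ kk = v' ∘ epr1 E 1 -> w2 D ∘ kk = epr2 E 1 ->
     iV D ∘ (bVE D ∘ kk) = Tm TS (bact E) ∘ M).
  { intros v' kk Hi K1 K2.
    rewrite comp_assoc, (bVE_spec J1 J2), <- comp_assoc. apply bTE_Tm.
    - rewrite comp_assoc, J1, <- comp_assoc, K1, comp_assoc, Hi, M1. reflexivity.
    - rewrite comp_assoc, J2, <- comp_assoc, K2, M2. reflexivity. }
  split.
  - intros [_ [v' [Hi [Hr Heq]]]].
    assert (Hk : rV D ∘ (v' ∘ epr1 E 1) = gt G ∘ epr2 E 1)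
      by (rewrite comp_assoc, Hr, action_square; reflexivity).
    destruct (pb_lift (VEG_pb D) _ _ Hk) as [kk [K1 K2]].
    rewrite <- (Hkey v' kk Hi K1 K2), (Heq kk K1 K2), comp_assoc, Hi. reflexivity.
  - intros Hinv. split; [exact Hv|].
    destruct (pb_lift (VE_pb D) _ _ Hvert) as [v' [Hi Hr]].
    exists v'. split; [exact Hi|]. split; [exact Hr|].
    intros kk K1 K2. apply (pb_jointly_monic (VE_pb D)).
    + rewrite (Hkey v' kk Hi K1 K2), Hinv, comp_assoc, Hi. reflexivity.
    + rewrite comp_assoc, bVE_over, <- comp_assoc, K2, comp_assoc, Hr, ax_ract. reflexivity.
Qed.

Section DifferentiableAction.
Hypothesis TPB : is_pb (Tm TS (br E)) (Tm TS (gt G)) (Tm TS (epr1 E 1)) (Tm TS (epr2 E 1)).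

Lemma action_lift_exists {v : hom (bE E) (T TS (bE E))} :
  vector_field TS _ v -> vertical v -> exists M, vector_field TS _ M /\ action_lift v M.
Proof.
  intros Hv Hvert.
  assert (Hc : Tm TS (br E) ∘ (v ∘ epr1 E 1) = Tm TS (gt G) ∘ (tz TS _ ∘ epr2 E 1)).
  { rewrite comp_assoc, Hvert, <- comp_assoc, action_square, !comp_assoc, tz_nat.
    reflexivity. }
  destruct (pb_lift TPB _ _ Hc) as [M [M1 M2]].
  exists M. split; [|split; assumption].
  apply (pb_jointly_monic (EG_pb E (le_n 1))); rewrite comp_idr, comp_assoc, !tp_nat,
    <- !comp_assoc, ?M1, ?M2, comp_assoc, ?Hv, ?ax_zero_sec; apply comp_idl.
Qed.

Lemma invariant_vf_iff_lift (v : hom (bE E) (T TS (bE E))) :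
  invariant_vf D v <->
  vector_field TS _ v /\ vertical v /\
  exists M, vector_field TS _ M /\ action_lift v M /\ related TS (bact E) M v.
Proof.
  split.
  - intros Hinv. pose proof (proj1 Hinv) as Hv. pose proof (invariant_vertical Hinv) as Hvert.
    destruct (action_lift_exists Hv Hvert) as [M [HM HL]].
    split; [exact Hv|]. split; [exact Hvert|]. exists M. split; [exact HM|]. split; [exact HL|].
    exact (proj1 (invariant_vf_iff_related Hv Hvert HL) Hinv).
  - intros [Hv [Hvert [M [_ [HL HR]]]]]. exact (proj2 (invariant_vf_iff_related Hv Hvert HL) HR).
Qed.

Lemma invariant_tz : invariant_vf D (tz TS (bE E)).
Proof.
  apply invariant_vf_iff_lift. split; [|split]; [apply vector_field_tz | apply related_tz|].
  exists (tz TS _). repeat split; apply vector_field_tz || apply related_tz.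
Qed.

Lemma invariant_tadd (v w : hom (bE E) (T TS (bE E))) :
  invariant_vf D v -> invariant_vf D w -> invariant_vf D (tadd TS v w).
Proof.
  intros [Hv [Vv [Mv [HMv [[Mv1 Mv2] Rv]]]]]%invariant_vf_iff_lift
         [Hw [Vw [Mw [HMw [[Mw1 Mw2] Rw]]]]]%invariant_vf_iff_lift.
  assert (Hvw : tp TS _ ∘ v = tp TS _ ∘ w) by congruence.
  assert (HM : tp TS _ ∘ Mv = tp TS _ ∘ Mw) by congruence.
  apply invariant_vf_iff_lift. split; [|split].
  - unfold vector_field. rewrite tp_tadd; auto.
  - apply related_tadd_tz; auto.
  - exists (tadd TS Mv Mw). split; [unfold vector_field; rewrite tp_tadd; auto|].
    split; [split|]; [apply related_tadd | apply related_tadd_tz | apply related_tadd]; auto.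
Qed.

Lemma invariant_tneg (v : hom (bE E) (T TS (bE E))) :
  invariant_vf D v -> invariant_vf D (tneg TS _ ∘ v).
Proof.
  intros [Hv [Vv [Mv [HMv [[Mv1 Mv2] Rv]]]]]%invariant_vf_iff_lift.
  apply invariant_vf_iff_lift. split; [|split].
  - unfold vector_field. rewrite tp_tneg. exact Hv.
  - apply related_tneg_tz, Vv.
  - exists (tneg TS _ ∘ Mv). split; [unfold vector_field; rewrite tp_tneg; exact HMv|].
    split; [split|]; [apply related_tneg | apply related_tneg_tz | apply related_tneg]; auto.
Qed.

Hypothesis T2PB : is_pb (Tm TS (Tm TS (br E))) (Tm TS (Tm TS (gt G)))
                        (Tm TS (Tm TS (epr1 E 1))) (Tm TS (Tm TS (epr2 E 1))).

Lemma action_lift_bracket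
    {v w u : hom (bE E) (T TS (bE E))} {Mv Mw Mu : hom (EG E 1) (T TS (EG E 1))} :
  vector_field TS _ v -> vector_field TS _ w -> vector_field TS _ u ->
  vector_field TS _ Mv -> vector_field TS _ Mw -> vector_field TS _ Mu ->
  action_lift v Mv -> action_lift w Mw -> action_lift u Mu ->
  delta TS _ v w = lambda2 TS _ w u -> delta TS _ Mv Mw = lambda2 TS _ Mw Mu.
Proof.
  intros Hv Hw Hu HMv HMw HMu [Mv1 Mv2] [Mw1 Mw2] [Mu1 Mu2] B.
  assert (HMwu : tp TS _ ∘ Mw = tp TS _ ∘ Mu) by congruence.
  apply (pb_jointly_monic T2PB).
  - rewrite (Tm_delta_related TS _ Mv Mw v w u HMv Hv Hw Hu Mv1 Mw1 B), lambda2_Tm, Mw1, Mu1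
      by auto.
    reflexivity.
  - rewrite (Tm_delta_related TS _ Mv Mw _ _ _ HMv (vector_field_tz TS _)
               (vector_field_tz TS _) (vector_field_tz TS _) Mv2 Mw2 (delta_tz_lambda2 TS _)),
      lambda2_Tm, Mw2, Mu2 by auto.
    reflexivity.
Qed.

Lemma invariant_bracket (v w u : hom (bE E) (T TS (bE E))) :
  invariant_vf D v -> invariant_vf D w -> is_bracket TS _ v w u -> invariant_vf D u.
Proof.
  intros [Hv [Vv [Mv [HMv [Lv Rv]]]]]%invariant_vf_iff_lift
         [Hw [Vw [Mw [HMw [Lw Rw]]]]]%invariant_vf_iff_lift Hbr.
  pose proof (proj1 Hbr) as Hu.
  pose proof (is_bracket_delta TS _ v w u Hv Hw Hbr) as B.
  assert (Vu : vertical u).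
  { exact (related_bracket TS (br E) v w u _ _ _ Hv (vector_field_tz TS _)
             (vector_field_tz TS _) (vector_field_tz TS _) Vv Vw (delta_tz_lambda2 TS _) Hw Hu B). }
  destruct (action_lift_exists Hu Vu) as [Mu [HMu Lu]].
  apply invariant_vf_iff_lift. split; [exact Hu|]. split; [exact Vu|].
  exists Mu. split; [exact HMu|]. split; [exact Lu|].
  apply (related_bracket TS (bact E) Mv Mw Mu v w u HMv Hv Hw Hu Rv Rw B HMw HMu).
  exact (action_lift_bracket Hv Hw Hu HMv HMw HMu Lv Lw Lu B).
Qed.

End DifferentiableAction.

Lemma differentiable_bundle_action_pb :
  differentiable_bundle TS E ->
  is_pb (Tm TS (br E)) (Tm TS (gt G)) (Tm TS (epr1 E 1)) (Tm TS (epr2 E 1)) /\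
  is_pb (Tm TS (Tm TS (br E))) (Tm TS (Tm TS (gt G)))
        (Tm TS (Tm TS (epr1 E 1))) (Tm TS (Tm TS (epr2 E 1))).
Proof.
  intros [_ Hb].
  pose proof (proj2 (proj2 (proj2 (Hb 1 2 1 (le_n 1) (le_n 2)))) _ _ _
                (EG_pb E (le_n 1))) as PB1.
  pose proof (proj2 (proj2 (proj2 (Hb 2 2 1 (le_S _ _ (le_n 1)) (le_n 2)))) _ _ _
                (EG_pb E (le_n 1))) as PB2.
  simpl in PB1, PB2. rewrite tk_1 in PB1, PB2. split; assumption.
Qed.

End InvariantVectorFields.

Theorem mainTheorem1 (C : Cat) (TS : Tangent C) (G : Groupoid C) (E : RBundle G)
    (D : VData TS E) :
  differentiable_bundle TS E ->
  invariant_vf D (tz TS (bE E)) /\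
  (forall (v w : hom (bE E) (T TS (bE E))) (h : hom (bE E) (T2 TS (bE E))),
     invariant_vf D v -> invariant_vf D w ->
     t2p1 TS (bE E) ∘ h = v -> t2p2 TS (bE E) ∘ h = w ->
     invariant_vf D (tplus TS (bE E) ∘ h)) /\
  (forall v : hom (bE E) (T TS (bE E)),
     invariant_vf D v -> invariant_vf D (tneg TS (bE E) ∘ v)) /\
  (forall v w u : hom (bE E) (T TS (bE E)),
     invariant_vf D v -> invariant_vf D w -> is_bracket TS (bE E) v w u ->
     invariant_vf D u).
Proof.
  intros [TPB T2PB]%differentiable_bundle_action_pb.
  split; [|split; [|split]].
  - exact (invariant_tz D TPB).
  - intros v w h Hv Hw H1 H2. rewrite (tpair_unique TS v w h H1 H2).
    exact (invariant_tadd D TPB v w Hv Hw).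
  - exact (invariant_tneg D TPB).
  - exact (invariant_bracket D TPB T2PB).
Qed.
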